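(* Let $k\ge3$ and $q=2^{-1/k}$. Then the code $G_k\cdot G_k$, which encodes $(i,j)\in\mathcal{A}$ as the concatenation $G_k(i)G_k(j)$, is not optimal for $\mathrm{TDGD}(q)$.
   Context: $\mathcal{A}=\{(i,j): i,j\in\mathbb{Z}_{\ge 0}\}$; $\mathrm{TDGD}(q)$ is the distribution $P(i,j)=(1-q)^2q^{i+j}$ on $\mathcal{A}$; optimal means minimal expected codeword length among binary prefix codes for $\mathcal{A}$. For $N\ge1$, the quasi-uniform code $Q_N$ on symbols $0,\dots,N-1$ assigns $2^{\lceil\log_2N\rceil}-N$ codewords of length $\lfloor\log_2 N\rfloor$ to the first (smallest) symbols and codewords of length $\lceil\log_2N\rceil$ to the remaining $2N-2^{\lceil\log_2N\rceil}$ symbols. The Golomb code of order $k$ is $G_k(i)=Q_k(i\bmod k)\cdot u(\lfloor i/k\rfloor)$, where $u(n)$ is $n$ ones followed by a zero. *)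

From Stdlib Require Import Reals Lra Lia Arith List.
Import ListNotations.
Open Scope R_scope.

Definition code2 := nat -> nat -> list bool.

Definition is_prefix (s t : list bool) : Prop := exists u, s ++ u = t.

Definition prefix_code (C : code2) : Prop :=
  forall i j i' j', (i, j) <> (i', j') -> ~ is_prefix (C i j) (C i' j').

Definition tdgd (q : R) (i j : nat) : R := (1 - q) ^ 2 * q ^ (i + j).

Definition partial_exp_len (q : R) (C : code2) (N : nat) : R :=
  fold_right Rplus 0
    (map (fun i => fold_right Rplus 0
       (map (fun j => tdgd q i j * INR (length (C i j))) (seq 0 N))) (seq 0 N)).

(* The expected codeword length of C under TDGD(q) is finite and equals L
   (terms are nonnegative, so square partial sums give the full sum). *)
Definition exp_len (q : R) (C : code2) (L : R) : Prop :=
  Un_cv (partial_exp_len q C) L.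

(* Optimal: a prefix code with finite expected length that is <= the
   expected length of every prefix code (codes of infinite expected length
   are trivially no better). *)
Definition optimal (q : R) (C : code2) : Prop :=
  prefix_code C /\
  exists L, exp_len q C L /\
    forall C' L', prefix_code C' -> exp_len q C' L' -> L <= L'.

Fixpoint bits (w r : nat) : list bool :=
  match w with
  | O => []
  | S w' => Nat.testbit r w' :: bits w' r
  end.

(* quasi-uniform code Q_N on {0,...,N-1}: with c = ceil(log2 N) and
   t = 2^c - N, symbols r < t get the (c-1)-bit word of r, the others the
   c-bit word of r + t (truncated binary code). *)
Definition quasi_uniform (N r : nat) : list bool :=
  let c := Nat.log2_up N in
  let t := (2 ^ c - N)%nat in
  if Nat.ltb r t then bits (Nat.log2 N) r else bits c (r + t).

Definition unary (n : nat) : list bool := repeat true n ++ [false].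

Definition golomb (k i : nat) : list bool :=
  quasi_uniform k (Nat.modulo i k) ++ unary (Nat.div i k).

Definition golomb2 (k : nat) : code2 := fun i j => golomb k i ++ golomb k j.

(* An optimal code must give longer codewords only to less probable symbols.
   Under TDGD(q) the probability of (i, j) decreases strictly with i + j,
   while the length of G_k(i) G_k(j) is l(i) + l(j) for the Golomb length
   function l.  This l has a jump l(x) < l(x + 1) (where the quasi-uniform part
   switches from short to long words, or where the unary part grows) and a
   plateau l(y) = l(y + 2) (across the long words), so the symbol (x + 1, y)
   is more probable than (x, y + 2) yet gets a longer codeword.  Exchanging
   these two codewords keeps the code prefix-free and strictly decreases the
   expected length. *)
From Stdlib Require Import Reals Lra Lia Arith List Bool.
Open Scope R_scope.

Notation sumR := (fold_right Rplus 0).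

Lemma sum_map_update {A : Type} (f g : A -> R) (a : A) (l : list A) :
  NoDup l -> In a l -> (forall x, x <> a -> f x = g x) ->
  sumR (map g l) = sumR (map f l) + (g a - f a).
Proof.
  intros Hnd Ha Hfg.
  induction Hnd as [|x l Hx Hnd IH]; [destruct Ha|]; simpl.
  destruct Ha as [<-|Ha].
  - rewrite (map_ext_in g f l); [lra|].
    intros y Hy. symmetry. apply Hfg. intros ->. contradiction.
  - rewrite (Hfg x), IH by (auto; intros ->; contradiction). lra.
Qed.

Definition square_sum (N : nat) (f : nat -> nat -> R) : R :=
  sumR (map (fun i => sumR (map (f i) (seq 0 N))) (seq 0 N)).

Lemma square_sum_update N (f g : nat -> nat -> R) a b :
  (a < N)%nat -> (b < N)%nat ->
  (forall i j, (i, j) <> (a, b) -> f i j = g i j) ->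
  square_sum N g = square_sum N f + (g a b - f a b).
Proof.
  intros Ha Hb Hfg. unfold square_sum.
  rewrite (sum_map_update (fun i => sumR (map (f i) (seq 0 N))) _ a);
    [| apply seq_NoDup | apply in_seq; lia |].
  - rewrite (sum_map_update (f a) (g a) b);
      [lra | apply seq_NoDup | apply in_seq; lia |].
    intros j Hj. apply Hfg. congruence.
  - intros i Hi. f_equal. apply map_ext. intros j. apply Hfg. congruence.
Qed.

Lemma square_sum_update2 N (f g : nat -> nat -> R) a1 b1 a2 b2 :
  (a1, b1) <> (a2, b2) ->
  (a1 < N)%nat -> (b1 < N)%nat -> (a2 < N)%nat -> (b2 < N)%nat ->
  (forall i j, (i, j) <> (a1, b1) -> (i, j) <> (a2, b2) -> f i j = g i j) ->
  square_sum N g = square_sum N f + (g a1 b1 - f a1 b1) + (g a2 b2 - f a2 b2).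
Proof.
  intros Hne Ha1 Hb1 Ha2 Hb2 Hfg.
  set (h i j := if (i =? a1) && (j =? b1) then g i j else f i j).
  assert (Hh1 : h a1 b1 = g a1 b1) by (unfold h; now rewrite !Nat.eqb_refl).
  assert (Hh2 : h a2 b2 = f a2 b2).
  { unfold h. destruct (Nat.eqb_spec a2 a1), (Nat.eqb_spec b2 b1); subst;
      simpl; congruence. }
  rewrite (square_sum_update N h g a2 b2), (square_sum_update N f h a1 b1);
    auto; [lra| |]; intros i j Hij; unfold h;
    destruct (Nat.eqb_spec i a1), (Nat.eqb_spec j b1); subst; simpl;
    solve [ congruence | apply Hfg; congruence ].
Qed.

Lemma Un_cv_eventually_shift (u v : nat -> R) L d N0 :
  Un_cv u L -> (forall n, (N0 <= n)%nat -> v n = u n + d) -> Un_cv v (L + d).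
Proof.
  intros Hu Hv eps Heps. destruct (Hu eps Heps) as [N1 HN1].
  exists (N0 + N1)%nat. intros n Hn. unfold R_dist.
  rewrite Hv by lia.
  replace (u n + d - (L + d)) with (u n - L) by ring. apply HN1. lia.
Qed.

Definition swap_code (C : code2) a1 b1 a2 b2 : code2 := fun i j =>
  if (i =? a1) && (j =? b1) then C a2 b2
  else if (i =? a2) && (j =? b2) then C a1 b1 else C i j.

Lemma swap_code_prefix C a1 b1 a2 b2 :
  prefix_code C -> prefix_code (swap_code C a1 b1 a2 b2).
Proof.
  intros HC i j i' j' Hne. unfold swap_code.
  destruct (Nat.eqb_spec i a1), (Nat.eqb_spec j b1), (Nat.eqb_spec i a2),
    (Nat.eqb_spec j b2), (Nat.eqb_spec i' a1), (Nat.eqb_spec j' b1),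
    (Nat.eqb_spec i' a2), (Nat.eqb_spec j' b2);
    simpl; subst; apply HC; intro E; inversion E; subst; congruence.
Qed.

Lemma swap_code_l C a1 b1 a2 b2 : swap_code C a1 b1 a2 b2 a1 b1 = C a2 b2.
Proof. unfold swap_code. now rewrite !Nat.eqb_refl. Qed.

Lemma swap_code_r C a1 b1 a2 b2 :
  (a1, b1) <> (a2, b2) -> swap_code C a1 b1 a2 b2 a2 b2 = C a1 b1.
Proof.
  intros Hne. unfold swap_code. rewrite !Nat.eqb_refl.
  destruct (Nat.eqb_spec a2 a1), (Nat.eqb_spec b2 b1); subst; simpl; congruence.
Qed.

Lemma swap_code_other C a1 b1 a2 b2 i j :
  (i, j) <> (a1, b1) -> (i, j) <> (a2, b2) -> swap_code C a1 b1 a2 b2 i j = C i j.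
Proof.
  intros H1 H2. unfold swap_code.
  destruct (Nat.eqb_spec i a1), (Nat.eqb_spec j b1), (Nat.eqb_spec i a2),
    (Nat.eqb_spec j b2); subst; simpl; congruence.
Qed.

Lemma exchange_not_optimal q C a1 b1 a2 b2 :
  tdgd q a2 b2 < tdgd q a1 b1 -> (length (C a2 b2) < length (C a1 b1))%nat ->
  ~ optimal q C.
Proof.
  intros Hp Hl [HC [L [HL Hmin]]].
  assert (Hne : (a1, b1) <> (a2, b2)) by (intro E; inversion E; subst; lra).
  set (w (D : code2) i j := tdgd q i j * INR (length (D i j))).
  set (C' := swap_code C a1 b1 a2 b2).
  set (d := (tdgd q a1 b1 - tdgd q a2 b2)
            * (INR (length (C a2 b2)) - INR (length (C a1 b1)))).
  assert (Hd : d < 0).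
  { apply lt_INR in Hl. unfold d.
    assert (0 < (tdgd q a1 b1 - tdgd q a2 b2)
                * (INR (length (C a1 b1)) - INR (length (C a2 b2))))
      by (apply Rmult_lt_0_compat; lra). lra. }
  assert (HL' : exp_len q C' (L + d)).
  { apply (Un_cv_eventually_shift _ _ _ _ (S (a1 + b1 + a2 + b2)) HL).
    intros n Hn.
    change (square_sum n (w C') = square_sum n (w C) + d).
    rewrite (square_sum_update2 n (w C) (w C') a1 b1 a2 b2); try lia;
      [| exact Hne | intros i j H1 H2; unfold w, C'; now rewrite swap_code_other].
    unfold w, C', d. rewrite swap_code_l, swap_code_r by exact Hne. ring. }
  specialize (Hmin C' _ (swap_code_prefix C a1 b1 a2 b2 HC) HL'). lra.
Qed.

Lemma tdgd_lt q a1 b1 a2 b2 :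
  0 < q < 1 -> (a1 + b1 < a2 + b2)%nat -> tdgd q a2 b2 < tdgd q a1 b1.
Proof.
  intros Hq Hs. unfold tdgd. apply Rmult_lt_compat_l; [apply pow_lt; lra|].
  replace (a2 + b2)%nat with (a1 + b1 + (a2 + b2 - (a1 + b1)))%nat by lia.
  rewrite pow_add. rewrite <- (Rmult_1_r (q ^ (a1 + b1))) at 2.
  apply Rmult_lt_compat_l; [apply pow_lt; lra|].
  apply pow_lt_1_compat; [lra | lia].
Qed.

Definition product_code (c : nat -> list bool) : code2 := fun i j => c i ++ c j.

Lemma product_code_not_optimal q (c : nat -> list bool) x y :
  0 < q < 1 ->
  (length (c x) < length (c (S x)))%nat ->
  (length (c (y + 2)) <= length (c y))%nat ->
  ~ optimal q (product_code c).
Proof.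
  intros Hq Hjump Hplateau.
  apply (exchange_not_optimal q _ (S x) y x (y + 2)).
  - apply tdgd_lt; [exact Hq | lia].
  - unfold product_code. rewrite !length_app. lia.
Qed.

Lemma bits_length w r : length (bits w r) = w.
Proof. induction w; simpl; auto. Qed.

Lemma quasi_uniform_length N r :
  length (quasi_uniform N r) =
  if r <? 2 ^ Nat.log2_up N - N then Nat.log2 N else Nat.log2_up N.
Proof. unfold quasi_uniform. destruct (_ <? _); apply bits_length. Qed.

Lemma golomb_length k i :
  length (golomb k i) = (length (quasi_uniform k (i mod k)) + i / k + 1)%nat.
Proof.
  unfold golomb, unary. rewrite !length_app, repeat_length. simpl. lia.
Qed.

Lemma golomb_jump_plateau k : (3 <= k)%nat -> exists x y,
  (length (golomb k x) < length (golomb k (S x)))%nat /\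
  (length (golomb k (y + 2)) <= length (golomb k y))%nat.
Proof.
  intros Hk.
  set (A := Nat.log2 k). set (B := Nat.log2_up k).
  set (t := (2 ^ B - k)%nat).
  assert (HB : (2 ^ Nat.pred B < k <= 2 ^ B)%nat) by (apply Nat.log2_up_spec; lia).
  assert (HA : (2 ^ A <= k)%nat) by (apply Nat.log2_spec; lia).
  assert (Hpow : (2 ^ B = 2 * 2 ^ Nat.pred B)%nat).
  { assert (0 < B)%nat by (apply Nat.log2_up_pos; lia).
    replace B with (S (Nat.pred B)) at 1 by lia. reflexivity. }
  assert (Hsmall : forall r, (r < k)%nat ->
    length (golomb k r) = ((if r <? t then A else B) + 1)%nat).
  { intros r Hr. rewrite golomb_length, quasi_uniform_length,
      Nat.mod_small, Nat.div_small by exact Hr.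
    fold A B t. destruct (r <? t); lia. }
  assert (Hk_len : length (golomb k k) = ((if 0 <? t then A else B) + 2)%nat).
  { rewrite golomb_length, quasi_uniform_length, Nat.Div0.mod_same,
      Nat.div_same by lia.
    fold A B t. destruct (0 <? t); lia. }
  (* t is the number of short quasi-uniform words; the long words for the
     residues t .. k - 1 have the same length as the word for k when t > 0. *)
  destruct (Nat.eq_dec t 0) as [Ht | Ht].
  - exists (k - 1)%nat, 0%nat.
    replace (S (k - 1)) with k by lia.
    rewrite Hk_len, !Hsmall, Ht by lia. simpl. lia.
  - assert (HAB : B = S A).
    { assert (A <= B)%nat by apply Nat.le_log2_log2_up.
      assert (B <= S A)%nat by apply Nat.le_log2_up_succ_log2.
      assert (A <> B); [|lia]. intros HAB.
      unfold t in Ht. rewrite <- HAB in Ht. lia. }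
    exists (t - 1)%nat, (k - 2)%nat.
    replace (S (t - 1)) with t by lia. replace (k - 2 + 2)%nat with k by lia.
    rewrite Hk_len, !Hsmall by lia.
    rewrite (proj2 (Nat.ltb_lt (t - 1) t)), (proj2 (Nat.ltb_ge t t)),
      (proj2 (Nat.ltb_ge (k - 2) t)), (proj2 (Nat.ltb_lt 0 t)) by lia.
    lia.
Qed.

Lemma Rpower_neg_between b x : 1 < b -> 0 < x -> 0 < Rpower b (- x) < 1.
Proof.
  intros Hb Hx. split; [apply exp_pos|].
  rewrite <- (Rpower_O b) by lra. apply Rpower_lt; lra.
Qed.

Theorem corollary1 (k : nat) (hk : (3 <= k)%nat) :
  ~ optimal (Rpower 2 (- / INR k)) (golomb2 k).
Proof.
  assert (Hq : 0 < Rpower 2 (- / INR k) < 1).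
  { apply Rpower_neg_between; [lra|].
    apply Rinv_0_lt_compat, lt_0_INR. lia. }
  destruct (golomb_jump_plateau k hk) as (x & y & Hjump & Hplateau).
  exact (product_code_not_optimal _ (golomb k) x y Hq Hjump Hplateau).
Qed.
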